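(* Let $k_{cl}(n)$ be the largest $k$ such that Maker has a winning strategy in the $k$-clique game on $K_n$. Let $TT_k$ be the transitive tournament on $\{u_1,\dots,u_k\}$, with $u_i\to u_j$ for all $i<j$. Then Maker has a winning strategy in the $k$-tournament game $\mathcal{T}(k,n)$ in which the fixed tournament is $TT_k$, for $k=k_{cl}(n)$.
   Context: In the $k$-clique game on $K_n$, Maker (moving first) and Breaker alternately claim one unclaimed edge of $K_n$; Maker wins if her graph contains a clique on $k$ vertices. In the $k$-tournament game, each player additionally chooses an orientation for each claimed edge, and Maker wins if her digraph contains a copy of the fixed tournament. *)

From mathcomp Require Import all_boot.
Set Implicit Arguments. Unset Strict Implicit. Unset Printing Implicit Defensive.

Section Game.
Variable n : nat.
Notation V := 'I_n.

(* Moves are drawn from a finite type Mv;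
   each move m claims the (unordered) edge [ed m] of K_n (a 2-subset of the
   vertex set), possibly with extra data (e.g. an orientation).  A position is
   the pair (M, B) of moves made so far by Maker and Breaker; Maker is to move. *)
Variable Mv : finType.
Variable ed : Mv -> {set V}.
Variable W : {set Mv} -> Prop.  (* Maker's winning condition on her moves *)

Definition claimed (M B : {set Mv}) : {set {set V}} := [set ed x | x in M :|: B].

Definition legal (M B : {set Mv}) (m : Mv) : bool :=
  (#|ed m| == 2) && (ed m \notin claimed M B).

(* Maker (to move) has a winning strategy from position (M, B): either she
   has already won, or she has a legal move after which she has won, or after
   which the board is not exhausted and, whatever legal move Breaker answers,
   she again has a winning strategy.  (If the board is exhausted and Maker
   has not won, Maker loses.) *)
Inductive maker_wins : {set Mv} -> {set Mv} -> Prop :=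
| mw_won M B : W M -> maker_wins M B
| mw_move M B m : legal M B m ->
    (W (m |: M) \/
     ((exists b, legal (m |: M) B b) /\
      (forall b, legal (m |: M) B b -> maker_wins (m |: M) (b |: B)))) ->
    maker_wins M B.
End Game.

Definition has_clique n (k : nat) (M : {set {set 'I_n}}) : Prop :=
  exists S : {set 'I_n}, #|S| = k /\
    (forall x y, x \in S -> y \in S -> x != y -> [set x; y] \in M).

Definition clique_game_maker_wins (n k : nat) : Prop :=
  maker_wins (fun e : {set 'I_n} => e) (@has_clique n k) set0 set0.

(* ---- k-tournament game on K_n for the transitive tournament TT_k:
   moves are arcs (i, j), claiming edge {i, j} with orientation i -> j. ---- *)
Definition arc_edge n (a : 'I_n * 'I_n) : {set 'I_n} := [set a.1; a.2].

(* TT_k on vertices u_0,...,u_{k-1} with u_i -> u_j for i < j.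
   Maker's digraph contains a copy of TT_k. *)
Definition has_TT n (k : nat) (M : {set 'I_n * 'I_n}) : Prop :=
  exists f : 'I_k -> 'I_n, injective f /\
    (forall i j : 'I_k, (i < j)%N -> (f i, f j) \in M).

Definition TT_game_maker_wins (n k : nat) : Prop :=
  maker_wins (@arc_edge n) (@has_TT n k) set0 set0.

From mathcomp Require Import all_boot.
Set Implicit Arguments. Unset Strict Implicit. Unset Printing Implicit Defensive.

(* Maker transfers her clique strategy to the tournament game by orienting
   every edge she claims from its smaller to its larger endpoint.

   Positions of the two games are related through the forgetful map
   [arc_edge] sending an arc (i, j) to the edge {i, j}: the arc position
   (M', B') mirrors the edge position (arc_edge @: M', arc_edge @: B'), and
   legality of moves is preserved by this map (legal_arc_edge).  Since all of
   Maker's arcs point upwards, a clique S in her underlying graph yields a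
   copy of TT_k: listing S increasingly as f 0 < ... < f (k-1), every arc
   between f i and f j (i < j) is (f i, f j) (increasing_enumeration,
   has_TT_of_clique).  Following a winning clique strategy move by move,
   mirroring Breaker's arcs as edges, therefore wins the TT_k game
   (maker_wins_TT_of_clique).  The maximality of k among the clique-game
   winning values is not needed: the transfer works for every k. *)

Section OrderedVertices.
Variable n : nat.

Lemma sorted_enum_ord (S : {pred 'I_n}) : sorted ltn (map val (enum S)).
Proof.
have -> : enum S = filter (mem S) (enum 'I_n).
  by rewrite {2}/enum_mem filter_predT.
rewrite sorted_map sorted_filter //; first by move=> x y z; apply: ltn_trans.
by rewrite -sorted_map val_enum_ord iota_ltn_sorted.
Qed.

Lemma increasing_enumeration (S : {set 'I_n}) k : #|S| = k ->
  exists f : 'I_k -> 'I_n,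
    (forall i, f i \in S) /\ (forall i j : 'I_k, i < j -> f i < f j).
Proof.
move=> <-; exists (@enum_val _ (mem S)).
split=> [i | i j lt_ij]; first exact: enum_valP.
have ltSi : i < size (enum S) by rewrite -cardE.
have ltSj : j < size (enum S) by rewrite -cardE.
have x0 := enum_val i.
rewrite !(enum_val_nth x0) -!(nth_map x0 0 val) //.
apply: (sorted_ltn_nth ltn_trans) => //; first exact: sorted_enum_ord.
  by rewrite inE size_map.
by rewrite inE size_map.
Qed.

Lemma edge_increasing_pair (e : {set 'I_n}) :
  #|e| = 2 -> exists x y : 'I_n, x < y /\ e = [set x; y].
Proof.
move/eqP/cards2P => [x [y [neq_xy ->]]].
case: (ltngtP x y) => [lt_xy | lt_yx | eq_xy].
- by exists x, y.
- by exists y, x; rewrite setUC.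
- by move: neq_xy; rewrite (val_inj eq_xy) eqxx.
Qed.

Lemma increasing_pair_unique (a b x y : 'I_n) :
  a < b -> x < y -> [set a; b] = [set x; y] -> a = x /\ b = y.
Proof.
move=> lt_ab lt_xy eq_ab_xy; move: lt_ab.
have : a \in [set x; y] by rewrite -eq_ab_xy set21.
have : b \in [set x; y] by rewrite -eq_ab_xy set22.
rewrite !inE => /orP[] /eqP -> /orP[] /eqP ->; rewrite ?ltnn //.
by move=> lt_yx; have := ltn_trans lt_yx lt_xy; rewrite ltnn.
Qed.

End OrderedVertices.

Section Transfer.
Variable n : nat.
Notation arc := ('I_n * 'I_n)%type.

Definition increasing_arcs (M : {set arc}) : Prop := forall a, a \in M -> a.1 < a.2.

Lemma has_TT_of_clique k (M : {set arc}) :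
  increasing_arcs M -> has_clique k (@arc_edge n @: M) -> has_TT k M.
Proof.
move=> upM [S [cardS cliqueS]].
have [f [fS f_incr]] := increasing_enumeration cardS.
exists f; split.
  move=> i j eq_fij.
  by case: (ltngtP i j) => [/f_incr | /f_incr | /val_inj //]; rewrite eq_fij ltnn.
move=> i j lt_ij; have lt_fij := f_incr _ _ lt_ij.
have neq_fij : f i != f j by rewrite neq_ltn lt_fij.
case/imsetP: (cliqueS _ _ (fS i) (fS j) neq_fij) => a Ma edge_a.
have [<- <-] := increasing_pair_unique (upM a Ma) lt_fij (esym edge_a).
by rewrite -surjective_pairing.
Qed.

Lemma legal_arc_edge (M B : {set arc}) a :
  legal (@arc_edge n) M B a =
  legal id (@arc_edge n @: M) (@arc_edge n @: B) (arc_edge a).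
Proof. by rewrite /legal /claimed imset_id imsetU. Qed.

(* The recursive occurrence of
   [maker_wins] is nested under a disjunction, so the induction principle
   generated for it has no hypothesis there; we recurse structurally by [fix]. *)
Lemma maker_wins_TT_of_clique k : forall M B : {set {set 'I_n}},
  maker_wins id (@has_clique n k) M B ->
  forall M' B' : {set arc}, increasing_arcs M' ->
    M = @arc_edge n @: M' -> B = @arc_edge n @: B' ->
    maker_wins (@arc_edge n) (@has_TT n k) M' B'.
Proof.
fix IH 3 => M B win M' B' upM' defM defB.
case: M B / win defM defB => [M B won | M B e legal_e next] defM defB.
  by apply: mw_won; apply: has_TT_of_clique => //; rewrite -defM.
have [x [y [lt_xy def_e]]] : exists x y : 'I_n, x < y /\ e = [set x; y].
  by apply: edge_increasing_pair; move: legal_e => /andP[/eqP].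
set M'' := (x, y) |: M'.
have upM'' : increasing_arcs M''.
  by move=> a /setU1P[-> // | /upM'].
have defM'' : e |: M = @arc_edge n @: M'' by rewrite imsetU1 defM def_e.
apply: (@mw_move _ _ _ _ _ _ (x, y)).
  by rewrite legal_arc_edge -defM -defB /arc_edge -def_e.
case: next => [won | [[b legal_b] win_after]].
  by left; apply: has_TT_of_clique => //; rewrite -defM''.
right; split.
  have [x' [y' [_ def_b]]] := edge_increasing_pair (eqP (proj1 (andP legal_b))).
  by exists (x', y'); rewrite legal_arc_edge -defM'' -defB /arc_edge -def_b.
move=> b' legal_b'; rewrite legal_arc_edge -defM'' -defB in legal_b'.
by apply: (IH _ _ (win_after _ legal_b')) => //; rewrite imsetU1 defB.
Qed.

End Transfer.

Theorem mainTheorem9 (n k : nat) :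
  clique_game_maker_wins n k ->
  (forall k' : nat, clique_game_maker_wins n k' -> k' <= k) ->
  TT_game_maker_wins n k.
Proof.
move=> clique_win _.
apply: (maker_wins_TT_of_clique clique_win); rewrite ?imset0 //.
by move=> a; rewrite inE.
Qed.
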